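(* For real $p$, the inequalities $$\left( \frac{\sinh x}{x}\right) ^{2p}+\left( \frac{\tanh x}{x}\right)^{p}>\left( \frac{x}{\sinh x}\right) ^{2p}+\left( \frac{x}{\tanh x}\right)^{p}>2$$ hold for all $x\in(0,\infty)$ if and only if $p\geq 3/5$. *)

From Stdlib Require Import Reals.
Open Scope R_scope.

(* Write U = (x / sinh x)^(2p) and V = (x / tanh x)^p.  The first inequality reads
   1/U + 1/V > U + V, which is equivalent to U V < 1, i.e. to p (2 ln (x / sinh x)
   + ln (x / tanh x)) < 0; since x^3 cosh x < sinh^3 x this holds exactly when p > 0.
   For the second inequality and p >= 3/5, convexity of t |-> e^(r t) with r = 5p/3 >= 1
   gives U + V - 2 >= r (U0 + V0 - 2), where U0, V0 are the values at p = 3/5.  The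
   function U0 + V0 - 2 tends to 0 at 0+ and is increasing: after taking logarithms,
   positivity of its derivative is the inequality
     32 (x cosh x - sinh x)^5 x^3 cosh^2 x < (sinh x cosh x - x)^5 sinh^3 x.
   Conversely, U + V = 2 + p (p/9 - 1/15) x^4 + O(x^6), so for 0 < p < 3/5 the second
   inequality fails at small x; explicit Taylor bounds make this quantitative.
   The hyperbolic inequalities are proved by expanding the difference of the two sides
   into exponential monomials x^j e^(k x) and checking the signs of its Taylor
   coefficients: finitely many by computation, the rest because one exponential term
   dominates. *)

From Coquelicot Require Import Coquelicot.
From Stdlib Require Import Reals Lra Lia Psatz ZArith List Bool.
Import ListNotations.
Open Scope R_scope.
Open Scope bool_scope.

(** * Positivity certificates for exponential polynomials *)

(* [(a, j, k)] stands for the exponential monomial [a x^j e^(k x)]. *)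
Definition expterm : Type := (Z * nat * nat)%type.

(* Lets numerals in concrete terms be read in [Z] and [nat] rather than [R]. *)
Definition expterm_of (a : Z) (j k : nat) : expterm := (a, j, k).

Fixpoint expoly_eval (E : list expterm) (x : R) : R :=
  match E with
  | nil => 0
  | (a, j, k) :: E' => IZR a * x ^ j * exp x ^ k + expoly_eval E' x
  end.

Definition expterm_coef (t : expterm) (n : nat) : R :=
  let '(a, j, k) := t in
  if (j <=? n)%nat then IZR a * INR k ^ (n - j) / INR (fact (n - j)) else 0.

Fixpoint expoly_coef (E : list expterm) (n : nat) : R :=
  match E with
  | nil => 0
  | t :: E' => expterm_coef t n + expoly_coef E' n
  end.

Lemma exp_mul_INR k x : exp (INR k * x) = exp x ^ k.
Proof.
  induction k as [|k IH]; simpl pow.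
  - now rewrite Rmult_0_l, exp_0.
  - rewrite S_INR, <- IH, <- exp_plus. f_equal. ring.
Qed.

Lemma is_series_expterm a j k x :
  is_series (fun n => expterm_coef (a, j, k) n * x ^ n) (IZR a * x ^ j * exp x ^ k).
Proof.
  assert (Hexp : is_pseries (fun n => INR k ^ n / INR (fact n)) x (exp x ^ k)).
  { rewrite <- exp_mul_INR.
    eapply is_series_ext; [|exact (is_exp_Reals (INR k * x))]. intros n.
    unfold scal; simpl; unfold mult; simpl.
    rewrite (pow_n_pow (INR k * x)), (pow_n_pow x), Rpow_mult_distr. unfold Rdiv. ring. }
  apply (is_pseries_incr_n _ j), (is_pseries_scal (IZR a)) in Hexp.
  unfold is_pseries, scal in Hexp; simpl in Hexp; unfold mult in Hexp; simpl in Hexp.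
  rewrite pow_n_pow in Hexp.
  replace (IZR a * x ^ j * exp x ^ k) with (IZR a * (x ^ j * exp x ^ k)) by ring.
  eapply is_series_ext; [|exact Hexp]. intros n.
  unfold PS_scal, scal; simpl; unfold mult; simpl.
  rewrite PS_incr_n_simplify, pow_n_pow. unfold expterm_coef.
  destruct (Compare_dec.le_lt_dec j n) as [Hjn|Hjn].
  - rewrite (proj2 (Nat.leb_le j n) Hjn). unfold Rdiv. ring.
  - rewrite (proj2 (Nat.leb_gt j n) Hjn). unfold zero; simpl. ring.
  - apply Rmult_comm.
Qed.

Lemma is_series_expoly E x :
  is_series (fun n => expoly_coef E n * x ^ n) (expoly_eval E x).
Proof.
  induction E as [|[[a j] k] E IH]; simpl.
  - pose proof (is_series_expterm 0 0 0 x) as H0. rewrite !Rmult_0_l in H0.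
    eapply is_series_ext; [|exact H0]. intros n. simpl. unfold Rdiv. ring.
  - eapply is_series_ext; [|exact (is_series_plus _ _ _ _ (is_series_expterm a j k x) IH)].
    intros n. simpl. change plus with Rplus. ring.
Qed.

Fixpoint falling_Z (n j : nat) : Z :=
  match j with
  | O => 1
  | S j' => falling_Z n j' * (Z.of_nat n - Z.of_nat j')
  end.

Definition expterm_zcoef (t : expterm) (n : nat) : Z :=
  let '(a, j, k) := t in
  if (j <=? n)%nat then a * Z.of_nat k ^ Z.of_nat (n - j) * falling_Z n j else 0.

Fixpoint expoly_zcoef (E : list expterm) (n : nat) : Z :=
  match E with
  | nil => 0
  | t :: E' => expterm_zcoef t n + expoly_zcoef E' n
  end.

Lemma fact_falling_Z n j : (j <= n)%nat ->
  INR (fact n) = IZR (falling_Z n j) * INR (fact (n - j)).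
Proof.
  induction j as [|j IH]; intros Hj; simpl falling_Z.
  - rewrite Nat.sub_0_r. ring.
  - rewrite IH by lia. replace (n - j)%nat with (S (n - S j)) by lia.
    rewrite fact_simpl, mult_INR, mult_IZR, minus_IZR, <- !INR_IZR_INZ, S_INR.
    rewrite minus_INR by lia. rewrite S_INR. ring.
Qed.

Lemma expoly_coef_fact E n : expoly_coef E n * INR (fact n) = IZR (expoly_zcoef E n).
Proof.
  induction E as [|[[a j] k] E IH]; simpl; [ring|].
  rewrite plus_IZR, <- IH, Rmult_plus_distr_r. f_equal.
  destruct (j <=? n)%nat eqn:Hjn; [|ring].
  apply Nat.leb_le in Hjn.
  rewrite (fact_falling_Z n j Hjn), !mult_IZR, <- pow_IZR, <- INR_IZR_INZ.
  field. apply INR_fact_neq_0.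
Qed.

Lemma expoly_coef_nonneg E n : (0 <= expoly_zcoef E n)%Z -> 0 <= expoly_coef E n.
Proof.
  intros H. apply IZR_le in H. rewrite <- expoly_coef_fact in H.
  pose proof (INR_fact_lt_0 n). nra.
Qed.

Lemma expoly_coef_pos E n : (0 < expoly_zcoef E n)%Z -> 0 < expoly_coef E n.
Proof.
  intros H. apply IZR_lt in H. rewrite <- expoly_coef_fact in H.
  pose proof (INR_fact_lt_0 n). nra.
Qed.

Lemma is_series_pos (u : nat -> R) l N :
  is_series u l -> (forall n, 0 <= u n) -> 0 < u N -> 0 < l.
Proof.
  intros Hu Hnonneg HN.
  assert (Hmono : forall M m, sum_n u M <= sum_n u (M + m)).
  { intros M m. induction m as [|m IH]; [rewrite Nat.add_0_r; lra|].
    rewrite Nat.add_succ_r, sum_Sn. change plus with Rplus.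
    specialize (Hnonneg (S (M + m))). lra. }
  assert (HpartN : 0 < sum_n u N).
  { destruct N as [|N]; [now rewrite sum_O|].
    rewrite sum_Sn. change plus with Rplus.
    pose proof (Hmono 0%nat N) as H0N. rewrite sum_O in H0N.
    specialize (Hnonneg 0%nat). simpl in H0N. lra. }
  assert (Hlim : Rbar_le (sum_n u N) l).
  { apply (is_lim_seq_le (fun _ => sum_n u N) (fun m => sum_n u (N + m))).
    - exact (Hmono N).
    - apply is_lim_seq_const.
    - eapply is_lim_seq_ext; [intros m; now rewrite Nat.add_comm|].
      apply (is_lim_seq_incr_n (sum_n u) N l), Hu. }
  simpl in Hlim. lra.
Qed.

(* Twice the even part ([ev = true]) or the odd part ([ev = false]). *)
Definition expoly_parity_part (ev : bool) (E : list expterm) (x : R) : R :=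
  expoly_eval E x + (if ev then 1 else -1) * expoly_eval E (- x).

Lemma expoly_parity_part_pos ev E x N : 0 < x ->
  (forall n, Nat.even n = ev -> (0 <= expoly_zcoef E n)%Z) ->
  Nat.even N = ev -> (0 < expoly_zcoef E N)%Z ->
  0 < expoly_parity_part ev E x.
Proof.
  intros Hx Hcoef HN HNpos.
  set (c n := if Bool.eqb (Nat.even n) ev then 2 * expoly_coef E n * x ^ n else 0).
  assert (Hc : is_series c (expoly_parity_part ev E x)).
  { pose proof (is_series_scal (if ev then 1 else -1) _ _ (is_series_expoly E (- x))) as Hneg.
    eapply is_series_ext; [|exact (is_series_plus _ _ _ _ (is_series_expoly E x) Hneg)].
    intros n. change plus with Rplus. change scal with Rmult. unfold c.
    rewrite <- (Rmult_1_l x) at 2. rewrite Ropp_mult_distr_l, Rpow_mult_distr.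
    destruct (Nat.Even_or_Odd n) as [[m ->]|[m ->]].
    - rewrite pow_1_even, Nat.even_even.
      destruct ev; simpl; ring.
    - rewrite Nat.add_1_r, pow_1_odd, Nat.even_succ, Nat.odd_even.
      destruct ev; simpl; ring. }
  apply (is_series_pos c _ N Hc).
  - intros n. unfold c. destruct (Bool.eqb (Nat.even n) ev) eqn:Hn; [|lra].
    apply Bool.eqb_prop in Hn.
    pose proof (expoly_coef_nonneg E n (Hcoef n Hn)). pose proof (pow_le x n (Rlt_le _ _ Hx)). nra.
  - unfold c. rewrite HN, Bool.eqb_reflx.
    pose proof (expoly_coef_pos E N HNpos). pose proof (pow_lt x N Hx). nra.
Qed.

Definition expterm_zbound (t : expterm) (n : nat) : Z :=
  let '(a, j, k) := t in Z.abs a * Z.of_nat k ^ Z.of_nat n * Z.of_nat n ^ Z.of_nat j.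

Fixpoint expoly_zbound (E : list expterm) (n : nat) : Z :=
  match E with
  | nil => 0
  | t :: E' => expterm_zbound t n + expoly_zbound E' n
  end.

Lemma falling_Z_bounds n j : (j <= n)%nat ->
  (0 <= falling_Z n j <= Z.of_nat n ^ Z.of_nat j)%Z.
Proof.
  induction j as [|j IH]; intros Hj; simpl falling_Z; [simpl; lia|].
  rewrite Nat2Z.inj_succ, Z.pow_succ_r by lia.
  specialize (IH ltac:(lia)). nia.
Qed.

Lemma expterm_zcoef_ge a j k n : (1 <= k \/ j < n)%nat ->
  (- expterm_zbound (a, j, k) n <= expterm_zcoef (a, j, k) n)%Z.
Proof.
  intros Hkj. simpl.
  pose proof (Z.pow_nonneg (Z.of_nat k) (Z.of_nat n) ltac:(lia)).
  pose proof (Z.pow_nonneg (Z.of_nat n) (Z.of_nat j) ltac:(lia)).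
  destruct (j <=? n)%nat eqn:Hjn; [|nia].
  apply Nat.leb_le in Hjn.
  pose proof (falling_Z_bounds n j Hjn).
  assert (Hp : (0 <= Z.of_nat k ^ Z.of_nat (n - j) <= Z.of_nat k ^ Z.of_nat n)%Z).
  { split; [apply Z.pow_nonneg; lia|].
    destruct k as [|k]; [|apply Z.pow_le_mono_r; lia].
    change (Z.of_nat 0) with 0%Z. rewrite !Z.pow_0_l by lia. lia. }
  assert (Hprod : (0 <= Z.of_nat k ^ Z.of_nat (n - j) * falling_Z n j <=
                   Z.of_nat k ^ Z.of_nat n * Z.of_nat n ^ Z.of_nat j)%Z) by nia.
  rewrite <- !Z.mul_assoc.
  destruct (Z.abs_spec a) as [[Ha ->]|[Ha ->]]; nia.
Qed.

Lemma expoly_zcoef_ge E n :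
  Forall (fun t => let '(_, j, k) := t in (1 <= k \/ j < n)%nat) E ->
  (- expoly_zbound E n <= expoly_zcoef E n)%Z.
Proof.
  induction 1 as [|[[a j] k] E Ht _ IH]; simpl; [lia|].
  pose proof (expterm_zcoef_ge a j k n Ht). simpl in *. lia.
Qed.

Lemma expterm_zbound_succ a j k K N0 n : (1 <= N0 <= n)%nat ->
  (Z.of_nat k * Z.of_nat (S N0) ^ Z.of_nat j <= Z.of_nat K * Z.of_nat N0 ^ Z.of_nat j)%Z ->
  (expterm_zbound (a, j, k) (S n) <= Z.of_nat K * expterm_zbound (a, j, k) n)%Z.
Proof.
  intros Hn Hstep. cbv [expterm_zbound].
  set (pN := (Z.of_nat N0 ^ Z.of_nat j)%Z).
  assert (HpN : (0 < pN)%Z) by (apply Z.pow_pos_nonneg; lia).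
  assert (Hratio : (Z.of_nat (S n) ^ Z.of_nat j * pN <=
                    Z.of_nat (S N0) ^ Z.of_nat j * Z.of_nat n ^ Z.of_nat j)%Z).
  { unfold pN. rewrite <- !Z.pow_mul_l. apply Z.pow_le_mono_l. lia. }
  assert (Hkn : (Z.of_nat k * Z.of_nat (S n) ^ Z.of_nat j <= Z.of_nat K * Z.of_nat n ^ Z.of_nat j)%Z).
  { apply (Z.mul_le_mono_pos_r _ _ pN HpN).
    pose proof (Z.pow_nonneg (Z.of_nat n) (Z.of_nat j) ltac:(lia)). nia. }
  rewrite Nat2Z.inj_succ at 1. rewrite Z.pow_succ_r by lia.
  pose proof (Z.pow_nonneg (Z.of_nat k) (Z.of_nat n) ltac:(lia)).
  pose proof (Z.abs_nonneg a).
  assert (Hmul := Z.mul_le_mono_nonneg_l _ _ (Z.abs a * Z.of_nat k ^ Z.of_nat n) ltac:(nia) Hkn).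
  lia.
Qed.

Definition expterm_step_ok (K N0 : nat) (t : expterm) : Prop :=
  let '(_, j, k) := t in
  (1 <= k \/ j < N0)%nat /\
  (Z.of_nat k * Z.of_nat (S N0) ^ Z.of_nat j <= Z.of_nat K * Z.of_nat N0 ^ Z.of_nat j)%Z.

Lemma expoly_zbound_le E a0 K N0 : (1 <= N0)%nat ->
  Forall (expterm_step_ok K N0) E ->
  (expoly_zbound E N0 <= a0 * Z.of_nat K ^ Z.of_nat N0)%Z ->
  forall n, (N0 <= n)%nat -> (expoly_zbound E n <= a0 * Z.of_nat K ^ Z.of_nat n)%Z.
Proof.
  intros HN0 HE Hbase n Hn.
  assert (Hsucc : forall m, (N0 <= m)%nat ->
            (expoly_zbound E (S m) <= Z.of_nat K * expoly_zbound E m)%Z).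
  { intros m Hm. clear Hbase Hn.
    induction HE as [|[[a j] k] E [_ Hstep] _ IH]; simpl; [lia|].
    pose proof (expterm_zbound_succ a j k K N0 m ltac:(lia) Hstep). simpl in *. lia. }
  induction Hn as [|n Hn IH]; [exact Hbase|].
  rewrite Nat2Z.inj_succ, Z.pow_succ_r by lia.
  specialize (Hsucc n Hn).
  assert (Hmul := Z.mul_le_mono_nonneg_l _ _ (Z.of_nat K) ltac:(lia) IH).
  lia.
Qed.

Lemma expoly_zcoef_tail_nonneg a0 K N0 E : (0 < a0)%Z -> (1 <= N0)%nat ->
  Forall (expterm_step_ok K N0) E ->
  (expoly_zbound E N0 <= a0 * Z.of_nat K ^ Z.of_nat N0)%Z ->
  forall n, (N0 <= n)%nat -> (0 <= expoly_zcoef ((a0, 0%nat, K) :: E) n)%Z.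
Proof.
  intros Ha0 HN0 HE Hbase n Hn.
  pose proof (expoly_zbound_le E a0 K N0 HN0 HE Hbase n Hn).
  assert (Hterms : Forall (fun t => let '(_, j, k) := t in (1 <= k \/ j < n)%nat) E).
  { eapply Forall_impl; [|exact HE]. intros [[a j] k] [Hkj _]. lia. }
  pose proof (expoly_zcoef_ge E n Hterms).
  simpl expoly_zcoef. simpl expterm_zcoef. rewrite Nat.sub_0_r. lia.
Qed.

Definition expterm_step_okb (K N0 : nat) (t : expterm) : bool :=
  let '(_, j, k) := t in
  ((1 <=? k) || (j <? N0))%nat &&
  (Z.of_nat k * Z.of_nat (S N0) ^ Z.of_nat j <=? Z.of_nat K * Z.of_nat N0 ^ Z.of_nat j)%Z.

Lemma expterm_step_okbP K N0 t : expterm_step_okb K N0 t = true -> expterm_step_ok K N0 t.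
Proof.
  destruct t as [[a j] k]. unfold expterm_step_okb, expterm_step_ok.
  rewrite andb_true_iff, orb_true_iff, Nat.leb_le, Nat.ltb_lt, Z.leb_le. tauto.
Qed.

(* A finite check certifying that [expoly_parity_part ev E x] is positive for [x > 0], for [E]
   led by a term [a0 e^(K x)] with [a0 > 0]: below [N0] the relevant Taylor coefficients are
   inspected directly, and from [N0] on the leading term dominates all the others. *)
Definition expoly_cert (E : list expterm) (N0 : nat) (ev : bool) : bool :=
  let parity n := Bool.eqb (Nat.even n) ev in
  match E with
  | (a0, O, K) :: E' =>
      (0 <? a0)%Z && (1 <=? N0)%nat && forallb (expterm_step_okb K N0) E' &&
      (expoly_zbound E' N0 <=? a0 * Z.of_nat K ^ Z.of_nat N0)%Z &&
      forallb (fun n => negb (parity n) || (0 <=? expoly_zcoef E n)%Z) (seq 0 N0) &&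
      existsb (fun n => parity n && (0 <? expoly_zcoef E n)%Z) (seq 0 N0)
  | _ => false
  end.

Lemma expoly_cert_pos E N0 ev x : expoly_cert E N0 ev = true -> 0 < x ->
  0 < expoly_parity_part ev E x.
Proof.
  unfold expoly_cert. destruct E as [|[[a0 [|j]] K] E]; try discriminate.
  rewrite !andb_true_iff, Z.ltb_lt, Nat.leb_le, Z.leb_le,
    forallb_forall, forallb_forall, existsb_exists.
  intros [[[[[Ha0 HN0] Hstep] Hbase] Hlow] [N [HN HNpos]]] Hx.
  apply andb_true_iff in HNpos as [HNev HNpos].
  apply Bool.eqb_prop in HNev. apply Z.ltb_lt in HNpos.
  apply (expoly_parity_part_pos ev _ x N Hx); auto.
  intros n Hn.
  destruct (Nat.lt_ge_cases n N0) as [Hlt|Hge].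
  - specialize (Hlow n (proj2 (in_seq N0 0 n) ltac:(lia))).
    rewrite Hn, Bool.eqb_reflx in Hlow. now apply Z.leb_le.
  - apply (expoly_zcoef_tail_nonneg a0 K N0 E); auto.
    apply Forall_forall. intros t Ht. now apply expterm_step_okbP, Hstep.
Qed.

(** * Three hyperbolic inequalities *)

Lemma sinh_gt_taylor5 x : 0 < x -> x + x ^ 3 / 6 + x ^ 5 / 120 < sinh x.
Proof.
  intros Hx.
  set (E := [expterm_of 120 0 1; expterm_of (-120) 1 0; expterm_of (-20) 3 0;
             expterm_of (-1) 5 0]).
  assert (HE : expoly_parity_part false E x = 240 * (sinh x - (x + x ^ 3 / 6 + x ^ 5 / 120))).
  { unfold expoly_parity_part, sinh. simpl. rewrite exp_Ropp.
    pose proof (exp_pos x). field. lra. }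
  pose proof (expoly_cert_pos E 8 false x ltac:(vm_compute; reflexivity) Hx). lra.
Qed.

Lemma cube_mul_cosh_lt_sinh_cube x : 0 < x -> x ^ 3 * cosh x < sinh x ^ 3.
Proof.
  intros Hx.
  set (E := [expterm_of 1 0 3; expterm_of (-3) 0 1; expterm_of (-4) 3 1]).
  assert (HE : expoly_parity_part false E x = 8 * (sinh x ^ 3 - x ^ 3 * cosh x)).
  { unfold expoly_parity_part, sinh, cosh. simpl. rewrite exp_Ropp.
    pose proof (exp_pos x). field. lra. }
  pose proof (expoly_cert_pos E 10 false x ltac:(vm_compute; reflexivity) Hx). lra.
Qed.

Definition key_inequality_expoly : list expterm :=
  [expterm_of 2 0 13; expterm_of (-6) 0 11; expterm_of (-40) 1 11; expterm_of (-4) 0 9;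
   expterm_of 120 1 9; expterm_of 320 2 9; expterm_of 28 0 7; expterm_of 40 1 7;
   expterm_of (-960) 2 7; expterm_of 2816 3 7; expterm_of (-20480) 4 7; expterm_of 40960 5 7;
   expterm_of (-40960) 6 7; expterm_of 20480 7 7; expterm_of (-4096) 8 7; expterm_of (-10) 0 5;
   expterm_of (-440) 1 5; expterm_of (-8448) 3 5; expterm_of 23040 4 5; expterm_of 40960 5 5;
   expterm_of (-122880) 6 5; expterm_of 102400 7 5; expterm_of (-28672) 8 5; expterm_of (-50) 0 3;
   expterm_of 240 1 3; expterm_of 2560 2 3; expterm_of 2816 3 3; expterm_of 53760 4 3;
   expterm_of (-124928) 5 3; expterm_of (-40960) 6 3; expterm_of 184320 7 3; expterm_of (-86016) 8 3;
   expterm_of 40 0 1; expterm_of 560 1 1; expterm_of (-1920) 2 1; expterm_of 14080 3 1;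
   expterm_of (-56320) 4 1; expterm_of (-116736) 5 1; expterm_of 204800 6 1; expterm_of 102400 7 1;
   expterm_of (-143360) 8 1].

Lemma key_inequality x : 0 < x ->
  32 * (x * cosh x - sinh x) ^ 5 * x ^ 3 * cosh x ^ 2 < (sinh x * cosh x - x) ^ 5 * sinh x ^ 3.
Proof.
  intros Hx.
  assert (HE : expoly_parity_part true key_inequality_expoly x =
     16384 * ((sinh x * cosh x - x) ^ 5 * sinh x ^ 3
              - 32 * (x * cosh x - sinh x) ^ 5 * x ^ 3 * cosh x ^ 2)).
  { unfold expoly_parity_part, key_inequality_expoly, sinh, cosh. simpl. rewrite exp_Ropp.
    pose proof (exp_pos x). field. lra. }
  pose proof (expoly_cert_pos key_inequality_expoly 67 true x ltac:(vm_compute; reflexivity) Hx). lra.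
Qed.

(** * Elementary bounds *)

Lemma nondecreasing_of_derive (f df : R -> R) a b : a <= b ->
  (forall t, a <= t <= b -> is_derive f t (df t)) ->
  (forall t, a <= t <= b -> 0 <= df t) -> f a <= f b.
Proof.
  intros Hab Hd Hpos. destruct (Req_dec a b) as [<-|Hne]; [lra|].
  destruct (MVT_cor2 f df a b ltac:(lra)) as [c [Hc Hmvt]].
  - intros c Hc. apply is_derive_Reals, Hd. lra.
  - specialize (Hpos c ltac:(lra)). nra.
Qed.

Lemma increasing_of_derive (f df : R -> R) a b : a < b ->
  (forall t, a <= t <= b -> is_derive f t (df t)) ->
  (forall t, a < t < b -> 0 < df t) -> f a < f b.
Proof.
  intros Hab Hd Hpos.
  destruct (MVT_cor2 f df a b Hab) as [c [Hc Hmvt]].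
  - intros c Hc. apply is_derive_Reals, Hd. lra.
  - specialize (Hpos c ltac:(lra)). nra.
Qed.

Lemma le_of_derive_le (f g df dg : R -> R) x : 0 <= x ->
  (forall t, 0 <= t <= x -> is_derive f t (df t)) ->
  (forall t, 0 <= t <= x -> is_derive g t (dg t)) ->
  (forall t, 0 <= t <= x -> df t <= dg t) -> f 0 <= g 0 -> f x <= g x.
Proof.
  intros Hx Hf Hg Hle H0.
  enough (g 0 - f 0 <= g x - f x) by lra.
  apply (nondecreasing_of_derive (fun t => g t - f t) (fun t => dg t - df t) 0 x Hx).
  - intros t Ht. apply (is_derive_minus g f); auto.
  - intros t Ht. specialize (Hle t Ht). lra.
Qed.

Ltac solve_derive := intros ? ?; auto_derive; auto; field.

Lemma cosh_ge_1 x : 1 <= cosh x.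
Proof.
  unfold cosh. rewrite exp_Ropp. pose proof (exp_pos x).
  assert (0 <= (exp x - 1) ^ 2) by apply pow2_ge_0.
  apply Rmult_le_reg_r with (2 * exp x); [lra|]. field_simplify; nra.
Qed.

Lemma cosh_pos x : 0 < cosh x.
Proof. pose proof (cosh_ge_1 x). lra. Qed.

Lemma sinh_pos x : 0 < x -> 0 < sinh x.
Proof. intros Hx. rewrite <- sinh_0. now apply sinh_lt. Qed.

Lemma cosh_sq_sub_sinh_sq x : cosh x ^ 2 - sinh x ^ 2 = 1.
Proof. unfold cosh, sinh. rewrite exp_Ropp. pose proof (exp_pos x). field. lra. Qed.

Lemma sinh_lt_mul_cosh x : 0 < x -> sinh x < x * cosh x.
Proof.
  intros Hx.
  enough (0 * cosh 0 - sinh 0 < x * cosh x - sinh x) by (rewrite sinh_0 in H; lra).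
  apply (increasing_of_derive (fun t => t * cosh t - sinh t) (fun t => t * sinh t) 0 x Hx).
  - solve_derive.
  - intros t Ht. pose proof (sinh_pos t ltac:(lra)). nra.
Qed.

Lemma cosh_le_2 x : 0 <= x <= 1 -> cosh x <= 2.
Proof.
  intros Hx.
  assert (Hmono : cosh x <= cosh 1).
  { apply (nondecreasing_of_derive cosh sinh x 1); [lra| solve_derive |].
    intros t Ht. destruct (Req_dec t 0) as [->|Ht0]; [rewrite sinh_0; lra|].
    pose proof (sinh_pos t ltac:(lra)). lra. }
  assert (cosh 1 <= 2).
  { unfold cosh. rewrite exp_Ropp.
    pose proof exp_le_3. pose proof (exp_ineq1_le 1).
    apply Rmult_le_reg_r with (2 * exp 1); [lra|]. field_simplify; nra. }
  lra.
Qed.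

Lemma sinh_le_2x x : 0 <= x <= 1 -> sinh x <= 2 * x.
Proof.
  intros Hx.
  apply (le_of_derive_le sinh (fun t => 2 * t) cosh (fun _ => 2) x);
    [lra | solve_derive | solve_derive | |].
  - intros t Ht. apply cosh_le_2. lra.
  - rewrite sinh_0. lra.
Qed.

Lemma cosh_le_1_add_sq x : 0 <= x <= 1 -> cosh x <= 1 + x ^ 2.
Proof.
  intros Hx.
  apply (le_of_derive_le cosh (fun t => 1 + t ^ 2) sinh (fun t => 2 * t) x);
    [lra | solve_derive | solve_derive | |].
  - intros t Ht. apply sinh_le_2x. lra.
  - rewrite cosh_0. lra.
Qed.

Lemma sinh_le_deg3 x : 0 <= x <= 1 -> sinh x <= x + x ^ 3 / 3.
Proof.
  intros Hx.
  apply (le_of_derive_le sinh (fun t => t + t ^ 3 / 3) cosh (fun t => 1 + t ^ 2) x);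
    [lra | solve_derive | solve_derive | |].
  - intros t Ht. apply cosh_le_1_add_sq. lra.
  - rewrite sinh_0. lra.
Qed.

Lemma cosh_le_deg4 x : 0 <= x <= 1 -> cosh x <= 1 + x ^ 2 / 2 + x ^ 4 / 12.
Proof.
  intros Hx.
  apply (le_of_derive_le cosh (fun t => 1 + t ^ 2 / 2 + t ^ 4 / 12) sinh
           (fun t => t + t ^ 3 / 3) x);
    [lra | solve_derive | solve_derive | |].
  - intros t Ht. apply sinh_le_deg3. lra.
  - rewrite cosh_0. lra.
Qed.

Lemma sinh_le_deg5 x : 0 <= x <= 1 -> sinh x <= x + x ^ 3 / 6 + x ^ 5 / 60.
Proof.
  intros Hx.
  apply (le_of_derive_le sinh (fun t => t + t ^ 3 / 6 + t ^ 5 / 60) cosh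
           (fun t => 1 + t ^ 2 / 2 + t ^ 4 / 12) x);
    [lra | solve_derive | solve_derive | |].
  - intros t Ht. apply cosh_le_deg4. lra.
  - rewrite sinh_0. lra.
Qed.

Lemma cosh_le_deg6 x : 0 <= x <= 1 -> cosh x <= 1 + x ^ 2 / 2 + x ^ 4 / 24 + x ^ 6 / 360.
Proof.
  intros Hx.
  apply (le_of_derive_le cosh (fun t => 1 + t ^ 2 / 2 + t ^ 4 / 24 + t ^ 6 / 360) sinh
           (fun t => t + t ^ 3 / 6 + t ^ 5 / 60) x);
    [lra | solve_derive | solve_derive | |].
  - intros t Ht. apply sinh_le_deg5. lra.
  - rewrite cosh_0. lra.
Qed.

Lemma ln_le_sub_1 t : 0 < t -> ln t <= t - 1.
Proof.
  intros Ht. rewrite <- (ln_exp (t - 1)). apply ln_le; [exact Ht|].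
  pose proof (exp_ineq1_le (t - 1)). lra.
Qed.

Lemma ln_1p_ge t : 0 <= t -> t - t ^ 2 / 2 <= ln (1 + t).
Proof.
  intros Ht.
  apply (le_of_derive_le (fun t => t - t ^ 2 / 2) (fun t => ln (1 + t)) (fun t => 1 - t)
           (fun t => / (1 + t)) t); [lra | solve_derive | intros ? ?; auto_derive; lra | |].
  - intros s Hs. rewrite <- (Rmult_1_l (/ (1 + s))).
    apply Rle_div_r; [lra|]. nra.
  - rewrite Rplus_0_r, ln_1. lra.
Qed.

Lemma ln_1p_le u : 0 <= u -> ln (1 + u) <= u - u ^ 2 / 2 + u ^ 3 / 3.
Proof.
  intros Hu.
  apply (le_of_derive_le (fun t => ln (1 + t)) (fun t => t - t ^ 2 / 2 + t ^ 3 / 3)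
           (fun t => / (1 + t)) (fun t => 1 - t + t ^ 2) u);
    [lra | intros ? ?; auto_derive; lra | solve_derive | |].
  - intros s Hs. rewrite <- (Rmult_1_l (/ (1 + s))).
    apply Rle_div_l; [lra|]. pose proof (pow_le s 3 ltac:(lra)). simpl in *. nra.
  - rewrite Rplus_0_r, ln_1. lra.
Qed.

Lemma exp_neg_le w : 0 <= w -> exp (- w) <= 1 - w + w ^ 2 / 2.
Proof.
  intros Hw.
  apply (le_of_derive_le (fun t => exp (- t)) (fun t => 1 - t + t ^ 2 / 2)
           (fun t => - exp (- t)) (fun t => - 1 + t) w); [lra | solve_derive | solve_derive | |].
  - intros s Hs. pose proof (exp_ineq1_le (- s)). lra.
  - rewrite Ropp_0, exp_0. lra.
Qed.

Lemma exp_neg_ge w : 0 <= w -> 1 - w + w ^ 2 / 2 - w ^ 3 / 6 <= exp (- w).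
Proof.
  intros Hw.
  apply (le_of_derive_le (fun t => 1 - t + t ^ 2 / 2 - t ^ 3 / 6) (fun t => exp (- t))
           (fun t => - 1 + t - t ^ 2 / 2) (fun t => - exp (- t)) w);
    [lra | solve_derive | solve_derive | |].
  - intros s Hs. pose proof (exp_neg_le s ltac:(lra)). lra.
  - rewrite Ropp_0, exp_0. lra.
Qed.

Lemma exp_le_cubic z : 0 <= z <= 1 / 10 -> exp z <= 1 + z + z ^ 2 / 2 + z ^ 3.
Proof.
  intros Hz.
  pose proof (exp_neg_ge z ltac:(lra)) as Hge. rewrite exp_Ropp in Hge.
  pose proof (exp_pos z).
  assert (Hq : 0 < 1 - z + z ^ 2 / 2 - z ^ 3 / 6) by nra.
  assert (Hprod : 1 <= (1 + z + z ^ 2 / 2 + z ^ 3) * (1 - z + z ^ 2 / 2 - z ^ 3 / 6)) by nra.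
  assert (exp z * (1 - z + z ^ 2 / 2 - z ^ 3 / 6) <= 1).
  { apply Rmult_le_reg_r with (/ exp z); [now apply Rinv_0_lt_compat|].
    rewrite Rmult_comm, <- Rmult_assoc, Rinv_l by lra. lra. }
  nra.
Qed.

Lemma exp_mul_ge r u : 1 <= r -> 1 + r * (exp u - 1) <= exp (r * u).
Proof.
  intros Hr.
  assert (Hshift : exp u * (1 + (r * u - u)) <= exp (r * u)).
  { replace (r * u) with (u + (r * u - u)) at 2 by ring. rewrite exp_plus.
    apply Rmult_le_compat_l; [apply Rlt_le, exp_pos | apply exp_ineq1_le]. }
  assert (Hneg : exp u * (1 - u) <= 1).
  { pose proof (exp_ineq1_le (- u)) as H. rewrite exp_Ropp in H.
    pose proof (exp_pos u).
    apply Rmult_le_compat_l with (r := exp u) in H; [|lra].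
    rewrite Rinv_r in H by lra. lra. }
  assert ((r - 1) * (exp u * (1 - u)) <= (r - 1) * 1) by (apply Rmult_le_compat_l; lra).
  nra.
Qed.

(* For [x > 0] these are [ln (x / sinh x)] and [ln (x / tanh x)]; written as sums of
   logarithms so that [auto_derive] applies. *)
Definition log_ratio_sinh (x : R) : R := ln x - ln (sinh x).
Definition log_ratio_tanh (x : R) : R := ln x + ln (cosh x) - ln (sinh x).

Lemma Rpower_sinh_ratios x q : 0 < x ->
  Rpower (x / sinh x) q = exp (q * log_ratio_sinh x) /\
  Rpower (sinh x / x) q = / exp (q * log_ratio_sinh x).
Proof.
  intros Hx. pose proof (sinh_pos x Hx).
  unfold Rpower, log_ratio_sinh. rewrite <- exp_Ropp, !ln_div by lra.
  split; f_equal; ring.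
Qed.

Lemma Rpower_tanh_ratios x q : 0 < x ->
  Rpower (x / tanh x) q = exp (q * log_ratio_tanh x) /\
  Rpower (tanh x / x) q = / exp (q * log_ratio_tanh x).
Proof.
  intros Hx. pose proof (sinh_pos x Hx). pose proof (cosh_pos x).
  replace (x / tanh x) with (x * cosh x / sinh x) by (unfold tanh; field; lra).
  replace (tanh x / x) with (sinh x / (x * cosh x)) by (unfold tanh; field; lra).
  unfold Rpower, log_ratio_tanh. rewrite <- exp_Ropp.
  assert (0 < x * cosh x) by (apply Rmult_lt_0_compat; lra).
  rewrite !ln_div, ln_mult by lra.
  split; f_equal; ring.
Qed.

Lemma log_ratio_sum_neg x : 0 < x -> 2 * log_ratio_sinh x + log_ratio_tanh x < 0.
Proof.
  intros Hx. pose proof (sinh_pos x Hx). pose proof (cosh_pos x).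
  pose proof (cube_mul_cosh_lt_sinh_cube x Hx) as Hcube.
  apply ln_increasing in Hcube; [|apply Rmult_lt_0_compat; [apply pow_lt|]; lra].
  rewrite ln_mult, !ln_pow in Hcube by (try apply pow_lt; lra). simpl INR in Hcube.
  unfold log_ratio_sinh, log_ratio_tanh. lra.
Qed.

Lemma log_ratio_tanh_nonneg x : 0 < x -> 0 <= log_ratio_tanh x.
Proof.
  intros Hx. pose proof (sinh_pos x Hx) as Hs. pose proof (cosh_pos x).
  unfold log_ratio_tanh. rewrite <- ln_mult by lra.
  pose proof (ln_le _ _ Hs (Rlt_le _ _ (sinh_lt_mul_cosh x Hx))). lra.
Qed.

Lemma inv_add_inv_gt_add_iff U V : 0 < U -> 0 < V -> (/ U + / V > U + V <-> U * V < 1).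
Proof.
  intros HU HV.
  assert (Hdiff : / U + / V - (U + V) = (U + V) * (1 - U * V) / (U * V)) by (field; lra).
  assert (HUV : 0 < U * V) by nra.
  split; intros H.
  - destruct (Rlt_or_le (U * V) 1) as [Hlt|Hge]; [exact Hlt|].
    assert ((U + V) * (1 - U * V) / (U * V) <= 0).
    { unfold Rdiv. apply Rmult_le_0_r; [nra|]. apply Rlt_le, Rinv_0_lt_compat, HUV. }
    lra.
  - assert (0 < (U + V) * (1 - U * V) / (U * V)).
    { apply Rdiv_lt_0_compat; nra. }
    lra.
Qed.

Lemma first_inequality_iff p x : 0 < x ->
  (Rpower (sinh x / x) (2 * p) + Rpower (tanh x / x) p >
   Rpower (x / sinh x) (2 * p) + Rpower (x / tanh x) p <-> 0 < p).
Proof.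
  intros Hx.
  destruct (Rpower_sinh_ratios x (2 * p) Hx) as [-> ->].
  destruct (Rpower_tanh_ratios x p Hx) as [-> ->].
  rewrite inv_add_inv_gt_add_iff by apply exp_pos.
  rewrite <- exp_plus, <- exp_0.
  pose proof (log_ratio_sum_neg x Hx) as Hneg.
  replace (2 * p * log_ratio_sinh x + p * log_ratio_tanh x)
    with (p * (2 * log_ratio_sinh x + log_ratio_tanh x)) by ring.
  split; intros H.
  - apply exp_lt_inv in H. nra.
  - apply exp_increasing. nra.
Qed.

Definition excess35 (x : R) : R :=
  exp (6 / 5 * log_ratio_sinh x) + exp (3 / 5 * log_ratio_tanh x) - 2.

Definition excess35_deriv (x : R) : R :=
  3 / 5 / (x * sinh x * cosh x) *
  ((sinh x * cosh x - x) * exp (3 / 5 * log_ratio_tanh x)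
   - 2 * (x * cosh x - sinh x) * cosh x * exp (6 / 5 * log_ratio_sinh x)).

Lemma is_derive_excess35 x : 0 < x -> is_derive excess35 x (excess35_deriv x).
Proof.
  intros Hx. pose proof (sinh_pos x Hx). pose proof (cosh_pos x).
  unfold excess35, excess35_deriv, log_ratio_sinh, log_ratio_tanh.
  auto_derive; [repeat split; lra|].
  replace (sinh x * cosh x - x) with (sinh x * cosh x - x * (cosh x ^ 2 - sinh x ^ 2))
    by (rewrite cosh_sq_sub_sinh_sq; ring).
  unfold Rminus. field. repeat split; lra.
Qed.

Lemma key_inequality_exp x : 0 < x ->
  2 * (x * cosh x - sinh x) * cosh x * exp (6 / 5 * log_ratio_sinh x) <
  (sinh x * cosh x - x) * exp (3 / 5 * log_ratio_tanh x).
Proof.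
  intros Hx. pose proof (sinh_pos x Hx) as Hs. pose proof (cosh_ge_1 x) as Hc.
  pose proof (sinh_gt_taylor5 x Hx). pose proof (pow_lt x 3 Hx). pose proof (pow_lt x 5 Hx).
  pose proof (sinh_lt_mul_cosh x Hx). pose proof (key_inequality x Hx) as Hkey.
  unfold log_ratio_sinh, log_ratio_tanh.
  set (e1 := exp _). set (e2 := exp _).
  assert (He1 : 0 < e1) by apply exp_pos. assert (He2 : 0 < e2) by apply exp_pos.
  remember (sinh x) as s eqn:Heqs. remember (cosh x) as c eqn:Heqc. clear Heqs Heqc.
  assert (HA : 0 < s * c - x) by nra.
  assert (HB : 0 < x * c - s) by lra.
  apply ln_increasing in Hkey; [|repeat apply Rmult_lt_0_compat; try apply pow_lt; lra].
  replace 32 with (2 ^ 5) in Hkey by ring.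
  rewrite !ln_mult, !ln_pow in Hkey by (repeat apply Rmult_lt_0_compat; try apply pow_lt; lra).
  simpl INR in Hkey.
  apply ln_lt_inv; [repeat apply Rmult_lt_0_compat; lra | apply Rmult_lt_0_compat; lra |].
  unfold e1, e2.
  rewrite !ln_mult, !ln_exp by (try apply exp_pos; repeat apply Rmult_lt_0_compat; lra).
  lra.
Qed.

Lemma excess35_deriv_pos x : 0 < x -> 0 < excess35_deriv x.
Proof.
  intros Hx. unfold excess35_deriv. pose proof (sinh_pos x Hx). pose proof (cosh_pos x).
  pose proof (key_inequality_exp x Hx).
  apply Rmult_lt_0_compat; [|lra].
  apply Rdiv_lt_0_compat; [lra|]. apply Rmult_lt_0_compat; [apply Rmult_lt_0_compat|]; lra.
Qed.

Lemma excess35_ge e : 0 < e <= 1 -> - 2 * e ^ 2 <= excess35 e.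
Proof.
  intros He. pose proof (sinh_pos e ltac:(lra)) as Hs. pose proof (cosh_pos e) as Hc.
  assert (Hsc : ln (sinh e) <= ln e + ln (cosh e)).
  { rewrite <- ln_mult by lra. apply ln_le; [lra|].
    apply Rlt_le, sinh_lt_mul_cosh. lra. }
  pose proof (ln_le_sub_1 (cosh e) Hc).
  pose proof (cosh_le_1_add_sq e ltac:(lra)).
  pose proof (exp_ineq1_le (6 / 5 * log_ratio_sinh e)).
  pose proof (exp_ineq1_le (3 / 5 * log_ratio_tanh e)).
  unfold excess35, log_ratio_sinh, log_ratio_tanh in *. nra.
Qed.

Lemma nonneg_of_ge_neg_sq c d : 0 < d -> (forall e, 0 < e <= d -> - 2 * e ^ 2 <= c) -> 0 <= c.
Proof.
  intros Hd Hc. destruct (Rle_or_lt 0 c) as [Hle|Hlt]; [exact Hle|].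
  set (e := Rmin d (Rmin 1 (- c / 4))).
  assert (He : 0 < e) by (apply Rmin_glb_lt; [|apply Rmin_glb_lt]; lra).
  assert (He1 : e <= 1) by (eapply Rle_trans; [apply Rmin_r | apply Rmin_l]).
  assert (Hec : e <= - c / 4) by (eapply Rle_trans; [apply Rmin_r | apply Rmin_r]).
  specialize (Hc e (conj He (Rmin_l _ _))). nra.
Qed.

Lemma excess35_pos x : 0 < x -> 0 < excess35 x.
Proof.
  intros Hx.
  assert (Hlt : excess35 (x / 2) < excess35 x).
  { apply (increasing_of_derive excess35 excess35_deriv (x / 2) x);
      [lra | intros t Ht; apply is_derive_excess35; lra |].
    intros t Ht. apply excess35_deriv_pos. lra. }
  enough (0 <= excess35 (x / 2)) by lra.
  apply (nonneg_of_ge_neg_sq _ (Rmin 1 (x / 2))); [apply Rmin_glb_lt; lra|].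
  intros e He. pose proof (Rmin_l 1 (x / 2)). pose proof (Rmin_r 1 (x / 2)).
  eapply Rle_trans; [apply excess35_ge; lra|].
  apply (nondecreasing_of_derive excess35 excess35_deriv e (x / 2));
    [lra | intros t Ht; apply is_derive_excess35; lra |].
  intros t Ht. apply Rlt_le, excess35_deriv_pos. lra.
Qed.

Lemma second_inequality_of_ge p x : 3 / 5 <= p -> 0 < x ->
  Rpower (x / sinh x) (2 * p) + Rpower (x / tanh x) p > 2.
Proof.
  intros Hp Hx.
  destruct (Rpower_sinh_ratios x (2 * p) Hx) as [-> _].
  destruct (Rpower_tanh_ratios x p Hx) as [-> _].
  set (r := 5 * p / 3).
  replace (2 * p * log_ratio_sinh x) with (r * (6 / 5 * log_ratio_sinh x)) by (unfold r; field).
  replace (p * log_ratio_tanh x) with (r * (3 / 5 * log_ratio_tanh x)) by (unfold r; field).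
  pose proof (exp_mul_ge r (6 / 5 * log_ratio_sinh x) ltac:(unfold r; lra)).
  pose proof (exp_mul_ge r (3 / 5 * log_ratio_tanh x) ltac:(unfold r; lra)).
  pose proof (excess35_pos x Hx) as Hexcess. unfold excess35 in Hexcess.
  assert (0 < r * (exp (6 / 5 * log_ratio_sinh x) + exp (3 / 5 * log_ratio_tanh x) - 2))
    by (apply Rmult_lt_0_compat; unfold r; lra).
  lra.
Qed.

Lemma log_ratio_sinh_bounds x : 0 < x <= 1 ->
  x ^ 2 / 6 - x ^ 4 / 180 - x ^ 6 / 500 <= - log_ratio_sinh x <= x ^ 2 / 6 + x ^ 4 / 60.
Proof.
  intros Hx. pose proof (sinh_pos x ltac:(lra)).
  pose proof (sinh_gt_taylor5 x ltac:(lra)) as Hlo.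
  pose proof (sinh_le_deg5 x ltac:(lra)) as Hup.
  assert (Ha : - log_ratio_sinh x = ln (sinh x / x))
    by (unfold log_ratio_sinh; rewrite ln_div by lra; ring).
  rewrite Ha.
  set (y := x ^ 2). assert (Hy : 0 < y <= 1) by (unfold y; split; nra).
  set (T := y / 6 + y ^ 2 / 120).
  assert (HT : 0 <= T) by (unfold T; nra).
  assert (Hratio : 1 + T <= sinh x / x <= 1 + y / 6 + y ^ 2 / 60).
  { unfold T, y. split; apply Rmult_le_reg_r with x; try lra;
      unfold Rdiv; rewrite Rmult_assoc, Rinv_l, Rmult_1_r by lra; nra. }
  split.
  - apply Rle_trans with (T - T ^ 2 / 2).
    + replace (x ^ 4) with (y ^ 2) by (unfold y; ring).
      replace (x ^ 6) with (y ^ 3) by (unfold y; ring).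
      unfold T. nra.
    + eapply Rle_trans; [apply ln_1p_ge, HT|]. apply ln_le; lra.
  - pose proof (ln_le_sub_1 (sinh x / x) ltac:(lra)).
    replace (x ^ 4) with (y ^ 2) by (unfold y; ring). lra.
Qed.

Lemma log_ratio_tanh_le x : 0 < x -> x ^ 2 <= 3 / 10 ->
  log_ratio_tanh x <= x ^ 2 / 3 - 7 * x ^ 4 / 90 + 7 * x ^ 6 / 100.
Proof.
  intros Hx Hx2.
  assert (Hx1 : x <= 1) by nra.
  pose proof (cosh_ge_1 x). pose proof (cosh_le_deg6 x ltac:(lra)) as Hc.
  pose proof (log_ratio_sinh_bounds x ltac:(lra)) as [Ha _].
  set (y := x ^ 2) in *.
  replace (x ^ 4) with (y ^ 2) in * by (unfold y; ring).
  replace (x ^ 6) with (y ^ 3) in * by (unfold y; ring).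
  set (U := y / 2 + y ^ 2 / 24 + y ^ 3 / 360).
  assert (Hlog_cosh : ln (cosh x) <= U - U ^ 2 / 2 + U ^ 3 / 3).
  { replace (cosh x) with (1 + (cosh x - 1)) by ring.
    eapply Rle_trans; [apply ln_1p_le; lra|].
    set (v := cosh x - 1). assert (Hv : 0 <= v <= U) by (unfold v, U in *; lra).
    enough (0 <= (U - v) * (1 - (U + v) / 2 + (U ^ 2 + U * v + v ^ 2) / 3)) by nra.
    apply Rmult_le_pos; nra. }
  assert (Hsplit : log_ratio_tanh x = ln (cosh x) + log_ratio_sinh x)
    by (unfold log_ratio_tanh, log_ratio_sinh; ring).
  assert (Hy : 0 < y <= 3 / 10) by (split; [apply pow_lt | ]; lra).
  assert (Hpoly : U - U ^ 2 / 2 + U ^ 3 / 3 - (y / 6 - y ^ 2 / 180 - y ^ 3 / 500)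
                  <= y / 3 - 7 * y ^ 2 / 90 + 7 * y ^ 3 / 100).
  { unfold U. clear - Hy. pose proof (pow_lt y 3 (proj1 Hy)). nra. }
  lra.
Qed.

(* Here [y] plays the role of [x^2].  The terms of order [y] cancel, and [y] is chosen so that
   the term [p (p/9 - 1/15) y^2] equals [- 2/9 p y^3], which dominates the other terms of
   order [y^3]. *)
Lemma exp_sum_le_2 p y a b : 0 < p < 3 / 5 -> y = (3 / 5 - p) / 2 ->
  y / 6 - y ^ 2 / 180 - y ^ 3 / 500 <= a <= y / 6 + y ^ 2 / 60 ->
  0 <= b <= y / 3 - 7 * y ^ 2 / 90 + 7 * y ^ 3 / 100 ->
  exp (- (2 * p * a)) + exp (p * b) <= 2.
Proof.
  intros Hp Hy Ha Hb.
  assert (Hy0 : 0 < y <= 3 / 10) by lra.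
  pose proof (pow_lt y 2 (proj1 Hy0)). pose proof (pow_lt y 3 (proj1 Hy0)).
  assert (Ha0 : 0 <= a) by nra.
  assert (Hb3 : b <= y / 3) by nra.
  assert (Hpb : 0 <= p * b <= 1 / 10) by (split; nra).
  pose proof (exp_neg_le (2 * p * a) ltac:(nra)) as Hexp_a.
  pose proof (exp_le_cubic (p * b) Hpb) as Hexp_b.
  assert (Ha2 : a ^ 2 <= y ^ 2 / 36 + y ^ 3 / 150).
  { apply Rle_trans with ((y / 6 + y ^ 2 / 60) ^ 2); [apply pow_incr; lra | nra]. }
  assert (Hb2 : b ^ 2 <= (y / 3) ^ 2) by (apply pow_incr; lra).
  assert (Hb3' : b ^ 3 <= (y / 3) ^ 3) by (apply pow_incr; lra).
  assert (Hp3 : 0 < p ^ 3) by (apply pow_lt; lra).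
  assert (Hsum : - (2 * p * a) + (2 * p * a) ^ 2 / 2 + p * b + (p * b) ^ 2 / 2 + (p * b) ^ 3
                 <= - 2 * p * (y / 6 - y ^ 2 / 180 - y ^ 3 / 500) + 2 * p ^ 2 * (y ^ 2 / 36 + y ^ 3 / 150)
                    + p * (y / 3 - 7 * y ^ 2 / 90 + 7 * y ^ 3 / 100)
                    + p ^ 2 * (y / 3) ^ 2 / 2 + p ^ 3 * (y / 3) ^ 3).
  { replace ((2 * p * a) ^ 2 / 2) with (2 * p ^ 2 * a ^ 2) by field.
    replace ((p * b) ^ 2 / 2) with (p ^ 2 * b ^ 2 / 2) by field.
    replace ((p * b) ^ 3) with (p ^ 3 * b ^ 3) by ring.
    assert (p * b <= p * (y / 3 - 7 * y ^ 2 / 90 + 7 * y ^ 3 / 100)) by (apply Rmult_le_compat_l; lra).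
    assert (2 * p * a >= 2 * p * (y / 6 - y ^ 2 / 180 - y ^ 3 / 500)) by nra.
    assert (p ^ 2 * a ^ 2 <= p ^ 2 * (y ^ 2 / 36 + y ^ 3 / 150)) by (apply Rmult_le_compat_l; nra).
    assert (p ^ 2 * b ^ 2 <= p ^ 2 * (y / 3) ^ 2) by (apply Rmult_le_compat_l; nra).
    assert (p ^ 3 * b ^ 3 <= p ^ 3 * (y / 3) ^ 3) by (apply Rmult_le_compat_l; lra).
    lra. }
  assert (Hcancel : - 2 * p * (y / 6 - y ^ 2 / 180 - y ^ 3 / 500) + 2 * p ^ 2 * (y ^ 2 / 36 + y ^ 3 / 150)
                    + p * (y / 3 - 7 * y ^ 2 / 90 + 7 * y ^ 3 / 100)
                    + p ^ 2 * (y / 3) ^ 2 / 2 + p ^ 3 * (y / 3) ^ 3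
                    = p * y ^ 3 * (1 / 250 + 7 / 100 + p / 75 + p ^ 2 / 27 - 2 / 9)).
  { subst y. field. }
  assert (p * y ^ 3 * (1 / 250 + 7 / 100 + p / 75 + p ^ 2 / 27 - 2 / 9) < 0).
  { assert (0 < p * y ^ 3) by (apply Rmult_lt_0_compat; lra).
    assert (1 / 250 + 7 / 100 + p / 75 + p ^ 2 / 27 - 2 / 9 < 0) by nra.
    nra. }
  lra.
Qed.

Lemma second_inequality_fails p : 0 < p < 3 / 5 ->
  exists x, 0 < x /\ Rpower (x / sinh x) (2 * p) + Rpower (x / tanh x) p <= 2.
Proof.
  intros Hp.
  set (y := (3 / 5 - p) / 2).
  assert (Hy : 0 < y <= 3 / 10) by (unfold y; lra).
  exists (sqrt y).
  assert (Hx : 0 < sqrt y) by (apply sqrt_lt_R0; lra).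
  assert (Hx2 : sqrt y ^ 2 = y) by (apply pow2_sqrt; lra).
  set (x := sqrt y) in *. clearbody x.
  split; [exact Hx|].
  destruct (Rpower_sinh_ratios x (2 * p) Hx) as [-> _].
  destruct (Rpower_tanh_ratios x p Hx) as [-> _].
  pose proof (log_ratio_sinh_bounds x ltac:(nra)) as Ha.
  pose proof (log_ratio_tanh_le x Hx ltac:(lra)) as Hb.
  pose proof (log_ratio_tanh_nonneg x Hx).
  replace (x ^ 4) with (y ^ 2) in * by (rewrite <- Hx2; ring).
  replace (x ^ 6) with (y ^ 3) in * by (rewrite <- Hx2; ring).
  rewrite Hx2 in *.
  replace (2 * p * log_ratio_sinh x) with (- (2 * p * - log_ratio_sinh x)) by ring.
  apply (exp_sum_le_2 p y); auto.
Qed.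

Theorem corollary4p11 (p : R) :
  (forall x : R, 0 < x ->
     Rpower (sinh x / x) (2 * p) + Rpower (tanh x / x) p >
     Rpower (x / sinh x) (2 * p) + Rpower (x / tanh x) p /\
     Rpower (x / sinh x) (2 * p) + Rpower (x / tanh x) p > 2)
  <-> p >= 3 / 5.
Proof.
  split.
  - intros H. apply Rnot_lt_ge. intros Hp.
    destruct (Rle_or_lt p 0) as [Hp0|Hp0].
    + destruct (H 1 Rlt_0_1) as [Hfirst _].
      apply (first_inequality_iff p 1 Rlt_0_1) in Hfirst. lra.
    + destruct (second_inequality_fails p (conj Hp0 Hp)) as [x [Hx Hle]].
      destruct (H x Hx) as [_ Hsecond]. lra.
  - intros Hp x Hx. split.
    + apply first_inequality_iff; lra.
    + apply second_inequality_of_ge; lra.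
Qed.
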